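(* Let $\mathcal{V}$ be an inner product space, $\mathcal{L}$ a linear operator on $\mathcal{V}$, and $\mathcal{U}\subset\mathcal{V}$ the subspace spanned by an orthonormal system $\{\mathbf{v}_1,\dots,\mathbf{v}_K\}$. Suppose that $(1-\epsilon)\|\mathbf{v}_i\|^2\le\|\mathcal{L}\mathbf{v}_i\|^2\le(1+\epsilon)\|\mathbf{v}_i\|^2$ for all $1\le i\le K$, and $(1-\epsilon)\|\mathbf{v}_i\pm\mathbf{v}_j\|^2\le\|\mathcal{L}(\mathbf{v}_i\pm\mathbf{v}_j)\|^2\le(1+\epsilon)\|\mathbf{v}_i\pm\mathbf{v}_j\|^2$ for all $1\le i,j\le K$. Then $$(1-K\epsilon)\|\mathbf{w}\|^2\le\|\mathcal{L}\mathbf{w}\|^2\le(1+K\epsilon)\|\mathbf{w}\|^2\quad\text{for all }\mathbf{w}\in\mathcal{U}.$$ *)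

From mathcomp Require Import all_boot all_order all_algebra.
From mathcomp Require Import reals.
Set Implicit Arguments. Unset Strict Implicit. Unset Printing Implicit Defensive.
Import Order.TTheory GRing.Theory Num.Theory.
Local Open Scope ring_scope.

Definition is_inner_product (R : realType) (V : lmodType R) (ip : V -> V -> R) : Prop :=
  [/\ (forall u v, ip u v = ip v u),
      (forall (a : R) u v w, ip (a *: u + v) w = a * ip u w + ip v w),
      (forall v, 0 <= ip v v)
    & (forall v, ip v v = 0 -> v = 0)].

Definition norm2 (R : realType) (V : lmodType R) (ip : V -> V -> R) (v : V) : R :=
  ip v v.

Definition orthonormal_sys (R : realType) (V : lmodType R) (ip : V -> V -> R)
  (K : nat) (v : 'I_K -> V) : Prop :=
  forall i j, ip (v i) (v j) = (i == j)%:R.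

Definition in_span (R : realType) (V : lmodType R) (K : nat) (v : 'I_K -> V) (w : V) : Prop :=
  exists c : 'I_K -> R, w = \sum_(i < K) c i *: v i.

From mathcomp Require Import all_boot all_order all_algebra.
From mathcomp Require Import reals.
From mathcomp Require Import ring lra.
Import Order.TTheory GRing.Theory Num.Theory.
Local Open Scope ring_scope.

(** By polarization, the hypotheses on [v_i] and [v_i +- v_j] say that the
    Gram matrix [<L v_i, L v_j>] is entrywise within [eps] of the identity.
    For [w = sum_i c_i v_i] the defect [||L w||^2 - ||w||^2] is then the
    quadratic form [sum_(i,j) c_i c_j E_ij] with [|E_ij| <= eps], and
    [|c_i c_j| <= (c_i^2 + c_j^2) / 2] bounds it by [K eps sum_i c_i^2]. *)

Definition near_isometry_at {R : realType} {V : lmodType R} (ip : V -> V -> R)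
    (L : V -> V) (eps : R) (x : V) : Prop :=
  (1 - eps) * norm2 ip x <= norm2 ip (L x) <= (1 + eps) * norm2 ip x.

Section InnerProduct.
Context {R : realType} {V : lmodType R} {ip : V -> V -> R}.
Hypothesis ip_inner : is_inner_product ip.

Lemma ipC u w : ip u w = ip w u.
Proof. by case: ip_inner. Qed.

Lemma ipZDl a u v w : ip (a *: u + v) w = a * ip u w + ip v w.
Proof. by case: ip_inner. Qed.

Lemma ipBl u v w : ip (u - v) w = ip u w - ip v w.
Proof. by rewrite -scaleN1r addrC ipZDl mulN1r addrC. Qed.

Lemma ip0l w : ip 0 w = 0.
Proof. by rewrite -(subrr w) ipBl subrr. Qed.

Lemma ipDl u v w : ip (u + v) w = ip u w + ip v w.
Proof. by rewrite -{1}[u]scale1r ipZDl mul1r. Qed.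

Lemma ipZl a u w : ip (a *: u) w = a * ip u w.
Proof. by rewrite -[a *: u]addr0 ipZDl ip0l addr0. Qed.

Lemma ipDr u v w : ip w (u + v) = ip w u + ip w v.
Proof. by rewrite ipC ipDl !(ipC w). Qed.

Lemma ipBr u v w : ip w (u - v) = ip w u - ip w v.
Proof. by rewrite ipC ipBl !(ipC w). Qed.

Lemma ipZr a u w : ip w (a *: u) = a * ip w u.
Proof. by rewrite ipC ipZl ipC. Qed.

Lemma ip_suml (I : Type) (r : seq I) (F : I -> V) w :
  ip (\sum_(i <- r) F i) w = \sum_(i <- r) ip (F i) w.
Proof. exact: (big_morph (ip^~ w) (fun u v => ipDl u v w) (ip0l w)). Qed.

Lemma ip_sumr (I : Type) (r : seq I) (F : I -> V) w :
  ip w (\sum_(i <- r) F i) = \sum_(i <- r) ip w (F i).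
Proof. by rewrite ipC ip_suml; apply: eq_bigr => i _; rewrite ipC. Qed.

Lemma norm2_sum (I : finType) (c : I -> R) (u : I -> V) :
  norm2 ip (\sum_i c i *: u i) = \sum_i \sum_j c i * c j * ip (u i) (u j).
Proof.
rewrite /norm2 ip_suml; apply: eq_bigr => i _.
rewrite ipZl ip_sumr mulr_sumr; apply: eq_bigr => j _.
by rewrite ipZr mulrA.
Qed.

Lemma norm2D u w : norm2 ip (u + w) = norm2 ip u + 2 * ip u w + norm2 ip w.
Proof. rewrite /norm2 ipDl !ipDr (ipC w u); lra. Qed.

Lemma norm2B u w : norm2 ip (u - w) = norm2 ip u - 2 * ip u w + norm2 ip w.
Proof. rewrite /norm2 ipBl !ipBr (ipC w u); lra. Qed.

Context {n : nat} {v : 'I_n -> V}.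
Hypothesis v_orthonormal : orthonormal_sys ip v.

Lemma norm2_sum_orthonormal (c : 'I_n -> R) :
  norm2 ip (\sum_i c i *: v i) = \sum_i c i ^+ 2.
Proof.
rewrite norm2_sum; apply: eq_bigr => i _.
rewrite (bigD1 i) //= big1 => [|j /negbTE ji]; last by rewrite v_orthonormal eq_sym ji mulr0.
by rewrite v_orthonormal eqxx mulr1 addr0 expr2.
Qed.

Lemma gram_near_identity {L : {additive V -> V}} {eps i j} :
    near_isometry_at ip L eps (v i) ->
    near_isometry_at ip L eps (v i + v j) ->
    near_isometry_at ip L eps (v i - v j) ->
  `|ip (L (v i)) (L (v j)) - (i == j)%:R| <= eps.
Proof.
have vii k : norm2 ip (v k) = 1 by rewrite /norm2 v_orthonormal eqxx.
rewrite /near_isometry_at ler_norml; have [<- {j}|ij] := eqVneq i j.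
  by rewrite vii /norm2 /= => /andP[? ?] _ _; apply/andP; split; lra.
rewrite raddfD raddfB !norm2B !norm2D !vii v_orthonormal (negbTE ij) /=.
by move=> _ /andP[? ?] /andP[? ?]; apply/andP; split; lra.
Qed.

End InnerProduct.

Lemma sum_sum_addr (R : nmodType) (I : finType) (F : I -> R) :
  \sum_(i : I) \sum_(j : I) (F i + F j) = (\sum_i F i) *+ (#|I| + #|I|).
Proof.
under eq_bigr do rewrite big_split /=.
rewrite big_split /= [X in _ + X]exchange_big /= mulrnDr.
by rewrite -!sumrMnl; congr (_ + _); apply: eq_bigr => i _; rewrite sumr_const.
Qed.

Lemma normM_le_half_sqrD (R : realFieldType) (x y : R) :
  `|x * y| <= (x ^+ 2 + y ^+ 2) / 2.
Proof.
rewrite normrM -(real_normK (num_real x)) -(real_normK (num_real y)).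
have := sqr_ge0 (`|x| - `|y|); rewrite !expr2; nra.
Qed.

Lemma quadratic_form_bound {R : realFieldType} {I : finType}
    (c : I -> R) (E : I -> I -> R) (eps : R) :
    (forall i j, `|E i j| <= eps) ->
  `|\sum_i \sum_j c i * c j * E i j| <= #|I|%:R * eps * \sum_i c i ^+ 2.
Proof.
move=> E_small.
have double_sum : \sum_i \sum_j eps * ((c i ^+ 2 + c j ^+ 2) / 2)
    = #|I|%:R * eps * \sum_i c i ^+ 2.
  under eq_bigr do rewrite -mulr_sumr -mulr_suml.
  by rewrite -mulr_sumr -mulr_suml sum_sum_addr -[(\sum_i _) *+ _]mulr_natr natrD; field.
rewrite -double_sum; apply: le_trans (ler_norm_sum _ _ _) _.
apply: ler_sum => i _; apply: le_trans (ler_norm_sum _ _ _) _.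
apply: ler_sum => j _; rewrite normrM mulrC.
by rewrite ler_pM ?normr_ge0 ?E_small ?normM_le_half_sqrD.
Qed.

Theorem lemma3 (R : realType) (V : lmodType R) (ip : V -> V -> R)
  (L : {linear V -> V}) (K : nat) (v : 'I_K -> V) (eps : R) :
  is_inner_product ip ->
  orthonormal_sys ip v ->
  (forall i : 'I_K,
     (1 - eps) * norm2 ip (v i) <= norm2 ip (L (v i)) <= (1 + eps) * norm2 ip (v i)) ->
  (forall i j : 'I_K,
     (1 - eps) * norm2 ip (v i + v j) <= norm2 ip (L (v i + v j))
       <= (1 + eps) * norm2 ip (v i + v j)) ->
  (forall i j : 'I_K,
     (1 - eps) * norm2 ip (v i - v j) <= norm2 ip (L (v i - v j))
       <= (1 + eps) * norm2 ip (v i - v j)) ->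
  forall w : V, in_span v w ->
    (1 - K%:R * eps) * norm2 ip w <= norm2 ip (L w) <= (1 + K%:R * eps) * norm2 ip w.
Proof.
move=> ip_inner v_on Lv LvD LvB w [c ->].
set E := fun i j => ip (L (v i)) (L (v j)) - (i == j)%:R.
have defect : norm2 ip (L (\sum_i c i *: v i))
    = norm2 ip (\sum_i c i *: v i) + \sum_i \sum_j c i * c j * E i j.
  rewrite linear_sum; under eq_bigr do rewrite linearZ.
  rewrite !norm2_sum // -big_split; apply: eq_bigr => i _.
  rewrite -big_split; apply: eq_bigr => j _.
  by rewrite /= v_on -mulrDr addrC subrK.
have gram i j := gram_near_identity ip_inner v_on (Lv i) (LvD i j) (LvB i j).
have := quadratic_form_bound c E eps gram.
rewrite defect norm2_sum_orthonormal // card_ord ler_norml => /andP[? ?].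
by apply/andP; split; lra.
Qed.
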